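(* For every natural number $n\ge1$, $bell(n)=bell_+(n)$.
   Context: $\Re_{n+1}$ denotes the real $(n+1)\times(n+1)$ matrices with indices $0\le i,j\le n$. $bell(n)$ is the set of all $(p_{ij})\in\Re_{n+1}$ such that $p_{00}=1$ and there exist a finite-dimensional Hilbert space $H$, projections $E_1,\dots,E_n,F_1,\dots,F_n$ on $H$, and a density operator $W$ on $H\otimes H$ with $p_{i0}=\mathrm{tr}[W(E_i\otimes I)]$, $p_{0j}=\mathrm{tr}[W(I\otimes F_j)]$, $p_{ij}=\mathrm{tr}[W(E_i\otimes F_j)]$ for $i,j=1,\dots,n$. $bell_+(n)$ is the set of all $(q_{ij})\in\Re_{n+1}$ such that there exist a finite-dimensional Hilbert space $H$, positive semidefinite operators $A_0=I,A_1,\dots,A_n$ and $B_0=I,B_1,\dots,B_n$ on $H$ whose spectra are contained in $[0,1]$, and a density operator $W$ on $H\otimes H$ with $q_{ij}=\mathrm{tr}[W(A_i\otimes B_j)]$ for all $i,j=0,1,\dots,n$. *)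

From mathcomp Require Import all_boot all_algebra reals complex mxtens.
Set Implicit Arguments. Unset Strict Implicit. Unset Printing Implicit Defensive.
Import GRing.Theory Num.Theory.
Local Open Scope ring_scope.
Local Open Scope complex_scope.

Section QDefs.
Variable R : realType.
Local Notation C := (R[i]).

(* A Hilbert space of finite dimension d is modelled as C^d; operators are
   'M[C]_d, and H (x) H is C^(d*d) with the Kronecker product tensmx. *)

Definition adjmx (m n : nat) (A : 'M[C]_(m, n)) : 'M[C]_(n, m) :=
  (map_mx Num.conj A)^T.

Definition selfadj (d : nat) (A : 'M[C]_d) : Prop := adjmx A = A.

Definition psd (d : nat) (A : 'M[C]_d) : Prop :=
  selfadj A /\ forall v : 'cV[C]_d, 0 <= (adjmx v *m A *m v) 0 0.

Definition projection (d : nat) (P : 'M[C]_d) : Prop :=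
  P *m P = P /\ selfadj P.

Definition density (d : nat) (W : 'M[C]_d) : Prop :=
  psd W /\ \tr W = 1.

Definition spectrum_in01 (d : nat) (A : 'M[C]_d) : Prop :=
  forall a : C, eigenvalue A a -> 0 <= a <= 1.

Definition bell (n : nat) : 'M[R]_(n.+1) -> Prop := fun p =>
  p ord0 ord0 = 1 /\
  exists (d : nat) (E F : 'I_n -> 'M[C]_d) (W : 'M[C]_(d * d)),
    (forall k, projection (E k)) /\ (forall k, projection (F k)) /\
    density W /\
    (forall i : 'I_n,
        (p (lift ord0 i) ord0)%:C = \tr (W *m tensmx (E i) (1%:M : 'M[C]_d))) /\
    (forall j : 'I_n,
        (p ord0 (lift ord0 j))%:C = \tr (W *m tensmx (1%:M : 'M[C]_d) (F j))) /\
    (forall i j : 'I_n,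
        (p (lift ord0 i) (lift ord0 j))%:C = \tr (W *m tensmx (E i) (F j))).

Definition bell_plus (n : nat) : 'M[R]_(n.+1) -> Prop := fun q =>
  exists (d : nat) (A B : 'I_n.+1 -> 'M[C]_d) (W : 'M[C]_(d * d)),
    A ord0 = 1%:M /\ B ord0 = 1%:M /\
    (forall i, psd (A i) /\ spectrum_in01 (A i)) /\
    (forall j, psd (B j) /\ spectrum_in01 (B j)) /\
    density W /\
    (forall i j : 'I_n.+1, (q i j)%:C = \tr (W *m tensmx (A i) (B j))).

End QDefs.

(* Projections are positive operators with spectrum in {0, 1}, so bell(n) is
   contained in bell_+(n).  Conversely, an effect 0 <= A <= 1 on H is the
   compression J^* P J, with J : H -> H (+) H the first-summand isometry, of
   the projection
       P = [[A, S], [S, 1 - A]],   S = sqrt (A (1 - A)),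
   on H (+) H (Halmos' dilation; S is built by the spectral theorem, and
   P^2 = P reduces to scalar identities on the eigenvalues of A).  Dilating
   all the A_i and B_j this way and transporting the state W to
   (J (x) J) W (J (x) J)^* reproduces every correlation tr (W (A_i (x) B_j)). *)

From mathcomp Require Import all_boot all_algebra reals complex mxtens.
From mathcomp Require Import order spectral ring.
Import Order.TTheory GRing.Theory Num.Theory.
Local Open Scope ring_scope.
Set Implicit Arguments. Unset Strict Implicit.

Section Bell.
Variable R : realType.
Local Notation C := (R[i]).

Lemma adjmxM m n p (A : 'M[C]_(m, n)) (B : 'M[C]_(n, p)) :
  adjmx (A *m B) = adjmx B *m adjmx A.
Proof. by rewrite /adjmx map_mxM trmx_mul. Qed.

Lemma adjmxK m n (A : 'M[C]_(m, n)) : adjmx (adjmx A) = A.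
Proof. by apply/matrixP => i j; rewrite /adjmx !mxE conjCK. Qed.

Lemma adjmx1 n : adjmx (1%:M : 'M[C]_n) = 1%:M.
Proof. by rewrite /adjmx map_mx1 trmx1. Qed.

Lemma adjmx0 m n : adjmx (0 : 'M[C]_(m, n)) = 0.
Proof. by rewrite /adjmx map_mx0 trmx0. Qed.

Lemma adjmx_col m1 m2 n (A1 : 'M[C]_(m1, n)) (A2 : 'M[C]_(m2, n)) :
  adjmx (col_mx A1 A2) = row_mx (adjmx A1) (adjmx A2).
Proof. by rewrite /adjmx map_col_mx tr_col_mx. Qed.

Lemma adjmx_block m1 m2 n1 n2 (Aul : 'M[C]_(m1, n1)) (Aur : 'M[C]_(m1, n2))
    (Adl : 'M[C]_(m2, n1)) (Adr : 'M[C]_(m2, n2)) :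
  adjmx (block_mx Aul Aur Adl Adr) =
  block_mx (adjmx Aul) (adjmx Adl) (adjmx Aur) (adjmx Adr).
Proof. by rewrite /adjmx map_block_mx tr_block_mx. Qed.

Lemma adjmx_tens m n p q (A : 'M[C]_(m, n)) (B : 'M[C]_(p, q)) :
  adjmx (tensmx A B) = tensmx (adjmx A) (adjmx B).
Proof. by rewrite /adjmx map_mxT trmx_tens. Qed.

Lemma adjmx_diag n (v : 'rV[C]_n) :
  adjmx (diag_mx v) = diag_mx (map_mx Num.conj v).
Proof. by rewrite /adjmx map_diag_mx tr_diag_mx. Qed.

Lemma tensmx11 m n : tensmx (1%:M : 'M[C]_m) (1%:M : 'M[C]_n) = 1%:M.
Proof.
apply/matrixP => i j.
case: (mxtens_indexP i) => i1 i2; case: (mxtens_indexP j) => j1 j2.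
rewrite tensmxE !mxE (inj_eq (can_inj (@mxtens_indexK m n))) xpair_eqE.
by case: (i1 == j1); case: (i2 == j2); rewrite ?mulr1 ?mulr0 ?mul0r.
Qed.

Lemma psd1 n : psd (1%:M : 'M[C]_n).
Proof.
split=> [|v]; first by rewrite /selfadj adjmx1.
rewrite mulmx1 !mxE; apply: sumr_ge0 => k _.
by rewrite /adjmx !mxE mulrC mul_conjC_ge0.
Qed.

Lemma psd_conj m n (K : 'M[C]_(m, n)) (W : 'M[C]_n) :
  psd W -> psd (K *m W *m adjmx K).
Proof.
move=> [sW W_ge0]; split=> [|v].
  by rewrite /selfadj !adjmxM adjmxK sW mulmxA.
have -> : adjmx v *m (K *m W *m adjmx K) *m v =
          adjmx (adjmx K *m v) *m W *m (adjmx K *m v).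
  by rewrite !adjmxM adjmxK !mulmxA.
exact: W_ge0.
Qed.

Lemma density_conj m n (K : 'M[C]_(m, n)) (W : 'M[C]_n) :
  adjmx K *m K = 1%:M -> density W -> density (K *m W *m adjmx K).
Proof.
move=> K_isometry [W_psd trW]; split; first exact: psd_conj.
by rewrite mxtrace_mulC mulmxA K_isometry mul1mx.
Qed.

Lemma projection1 n : projection (1%:M : 'M[C]_n).
Proof. by split; [rewrite mulmx1 | rewrite /selfadj adjmx1]. Qed.

Lemma projection_psd n (P : 'M[C]_n) : projection P -> psd P.
Proof.
move=> [PP sP]; suff -> : P = P *m 1%:M *m adjmx P by apply/psd_conj/psd1.
by rewrite mulmx1 sP PP.
Qed.

Lemma projection_spectrum_in01 n (P : 'M[C]_n) :
  projection P -> spectrum_in01 P.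
Proof.
move=> [PP _] a /eigenvalueP [v vP v_neq0].
have : (a * a - a) *: v = 0.
  by rewrite scalerBl -scalerA -vP scalemxAl -vP -mulmxA PP subrr.
move/eqP; rewrite scaler_eq0 (negPf v_neq0) orbF subr_eq0 -{3}[a]mulr1.
have [->|a_neq0] := eqVneq a 0; first by rewrite lexx ler01.
by rewrite (inj_eq (mulfI a_neq0)) => /eqP ->; rewrite ler01 lexx.
Qed.

Section SpectralCalculus.
Variables (d : nat) (A : 'M[C]_d).
Local Notation U := (spectralmx A).
Local Notation l := (spectral_diag A).

Definition spectral_calc (f : C -> C) : 'M[C]_d :=
  adjmx U *m diag_mx (map_mx f l) *m U.

Lemma spectral_unitary : U *m adjmx U = 1%:M.
Proof. by rewrite /adjmx map_trmx; apply/unitarymxP/spectral_unitarymx. Qed.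

Lemma spectral_calcM f g :
  spectral_calc f *m spectral_calc g = spectral_calc (fun x => f x * g x).
Proof.
rewrite /spectral_calc !mulmxA -[_ *m U *m adjmx U]mulmxA spectral_unitary.
rewrite mulmx1 -[_ *m diag_mx _ *m diag_mx _]mulmxA mulmx_diag.
by congr (_ *m diag_mx _ *m _); apply/rowP => k; rewrite !mxE.
Qed.

Lemma spectral_calcD f g :
  spectral_calc f + spectral_calc g = spectral_calc (fun x => f x + g x).
Proof.
rewrite /spectral_calc -mulmxDl -mulmxDr -raddfD /=.
by congr (_ *m diag_mx _ *m _); apply/rowP => k; rewrite !mxE.
Qed.

Lemma adjmx_spectral_calc f :
  adjmx (spectral_calc f) = spectral_calc (fun x => (f x)^*).
Proof.
rewrite /spectral_calc !adjmxM adjmxK adjmx_diag mulmxA.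
by congr (_ *m diag_mx _ *m _); apply/rowP => k; rewrite !mxE.
Qed.

Lemma eq_spectral_calc f g :
  (forall k, f (l 0 k) = g (l 0 k)) -> spectral_calc f = spectral_calc g.
Proof.
by move=> fg; congr (_ *m diag_mx _ *m _); apply/rowP => k; rewrite !mxE fg.
Qed.

Lemma adjmx_spectral_calc_ge0 f :
  (forall k, 0 <= f (l 0 k)) -> adjmx (spectral_calc f) = spectral_calc f.
Proof.
move=> f_ge0; rewrite adjmx_spectral_calc.
by apply: eq_spectral_calc => k; apply: geC0_conj.
Qed.

Hypothesis sA : selfadj A.

Lemma spectral_decomposition : A = adjmx U *m diag_mx l *m U.
Proof.
have A_normal : A \is normalmx.
  by apply/normalmxP; have := sA; rewrite /selfadj /adjmx map_trmx => ->.
rewrite /adjmx map_trmx -invmx_unitary ?spectral_unitarymx //.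
exact/orthomx_spectralP.
Qed.

Lemma spectral_calc_id : spectral_calc id = A.
Proof. by rewrite [RHS]spectral_decomposition /spectral_calc map_mx_id. Qed.

Lemma spectral_diag_eigenvalue k : eigenvalue A (l 0 k).
Proof.
apply/eigenvalueP; exists (delta_mx 0 k *m U).
  rewrite [A in _ *m A = _]spectral_decomposition !mulmxA -[_ *m U *m adjmx U]mulmxA.
  rewrite spectral_unitary mulmx1 scalemxAl mul_mx_diag; congr (_ *m _).
  apply/rowP => j; rewrite !mxE eqxx /=.
  by case: (eqVneq j k) => [->|_]; [exact: mulrC | rewrite mul0r mulr0].
apply: contra_neq (@oner_neq0 C) => kU0.
have := congr1 (fun v => (v *m adjmx U) 0 k) kU0.
by rewrite -mulmxA spectral_unitary mulmx1 mul0mx mxE !eqxx mxE.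
Qed.

End SpectralCalculus.

Definition dilation_sqrt (x : C) := sqrtC (x * (1 - x)).

Definition halmos_dilation d (A : 'M[C]_d) : 'M[C]_(d + d) :=
  block_mx (spectral_calc A id) (spectral_calc A dilation_sqrt)
           (spectral_calc A dilation_sqrt) (spectral_calc A (fun x => 1 - x)).

Definition inlmx d : 'M[C]_(d + d, d) := col_mx 1%:M 0.

Lemma inlmx_isometry d : adjmx (inlmx d) *m inlmx d = 1%:M.
Proof. by rewrite adjmx_col adjmx1 adjmx0 mul_row_col mulmx1 mul0mx addr0. Qed.

Lemma inlmx_compress_block d (Aul Aur Adl Adr : 'M[C]_d) :
  adjmx (inlmx d) *m block_mx Aul Aur Adl Adr *m inlmx d = Aul.
Proof.
rewrite adjmx_col adjmx1 adjmx0 mul_row_block !mul1mx !mul0mx !addr0.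
by rewrite mul_row_col mulmx1 mulmx0 addr0.
Qed.

Lemma halmos_dilation_idem d (A : 'M[C]_d) :
  halmos_dilation A *m halmos_dilation A = halmos_dilation A.
Proof.
pose s := dilation_sqrt.
have s_sq x : s x * s x = x * (1 - x) by rewrite /s /dilation_sqrt -expr2 sqrtCK.
have e1 x : x * x + s x * s x = id x by rewrite s_sq /=; ring.
have e2 x : x * s x + s x * (1 - x) = s x by ring.
have e3 x : s x * x + (1 - x) * s x = s x by ring.
have e4 x : s x * s x + (1 - x) * (1 - x) = 1 - x by rewrite s_sq; ring.
have calc_eq f g : f =1 g -> spectral_calc A f = spectral_calc A g.
  by move=> fg; apply: eq_spectral_calc.
rewrite /halmos_dilation mulmx_block !spectral_calcM !spectral_calcD.
by rewrite (calc_eq _ _ e1) (calc_eq _ _ e2) (calc_eq _ _ e3) (calc_eq _ _ e4).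
Qed.

Lemma halmos_dilation_projection d (A : 'M[C]_d) :
  psd A -> spectrum_in01 A -> projection (halmos_dilation A).
Proof.
move=> [sA _] A01; split; first exact: halmos_dilation_idem.
have l_ge0 k : 0 <= spectral_diag A 0 k.
  by case/andP: (A01 _ (spectral_diag_eigenvalue sA k)).
have l_le1 k : 0 <= 1 - spectral_diag A 0 k.
  by rewrite subr_ge0; case/andP: (A01 _ (spectral_diag_eigenvalue sA k)).
have s_ge0 k : 0 <= dilation_sqrt (spectral_diag A 0 k).
  by rewrite sqrtC_ge0 mulr_ge0.
rewrite /selfadj /halmos_dilation adjmx_block.
by rewrite !adjmx_spectral_calc_ge0.
Qed.

Lemma halmos_dilation_compress d (A : 'M[C]_d) :
  selfadj A -> adjmx (inlmx d) *m halmos_dilation A *m inlmx d = A.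
Proof. by move=> sA; rewrite inlmx_compress_block spectral_calc_id. Qed.

Lemma mxtrace_conj_tens m n (J : 'M[C]_(m, n)) (W : 'M[C]_(n * n))
    (X Y : 'M[C]_m) :
  \tr (tensmx J J *m W *m adjmx (tensmx J J) *m tensmx X Y) =
  \tr (W *m tensmx (adjmx J *m X *m J) (adjmx J *m Y *m J)).
Proof.
rewrite -!tensmx_mul -adjmx_tens -!mulmxA mxtrace_mulC.
by rewrite !mulmxA.
Qed.

Definition extend_by_id d n (E : 'I_n -> 'M[C]_d) (k : 'I_n.+1) : 'M[C]_d :=
  if unlift ord0 k is Some i then E i else 1%:M.

Lemma extend_by_id_ord0 d n (E : 'I_n -> 'M[C]_d) : extend_by_id E ord0 = 1%:M.
Proof. by rewrite /extend_by_id unlift_none. Qed.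

Lemma extend_by_id_lift d n (E : 'I_n -> 'M[C]_d) i :
  extend_by_id E (lift ord0 i) = E i.
Proof. by rewrite /extend_by_id liftK. Qed.

Lemma extend_by_id_projection d n (E : 'I_n -> 'M[C]_d) :
  (forall i, projection (E i)) -> forall k, projection (extend_by_id E k).
Proof.
move=> hE k; case: (unliftP ord0 k) => [i|] ->.
  by rewrite extend_by_id_lift.
by rewrite extend_by_id_ord0; apply: projection1.
Qed.

Lemma bell_plus_of_bell n (p : 'M[R]_n.+1) : bell p -> bell_plus p.
Proof.
move=> [p00 [d [E [F [W [hE [hF [hW [pE [pF pEF]]]]]]]]]].
have effect (P : 'I_n -> 'M[C]_d) : (forall i, projection (P i)) ->
    forall k, psd (extend_by_id P k) /\ spectrum_in01 (extend_by_id P k).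
  move=> hP k; have Pk := extend_by_id_projection hP k.
  by split; [exact: projection_psd | exact: projection_spectrum_in01].
exists d, (extend_by_id E), (extend_by_id F), W.
split; first exact: extend_by_id_ord0.
split; first exact: extend_by_id_ord0.
split; first exact: effect.
split; first exact: effect.
split=> //.
move=> i j; case: (unliftP ord0 i) => [i'|] ->; case: (unliftP ord0 j) => [j'|] ->;
  rewrite ?extend_by_id_lift ?extend_by_id_ord0 //.
by rewrite p00 tensmx11 mulmx1 hW.2.
Qed.

Lemma bell_of_bell_plus n (q : 'M[R]_n.+1) : bell_plus q -> bell q.
Proof.
move=> [d [A [B [W [A0 [B0 [hA [hB [hW hq]]]]]]]]].
split.
  by have := hq ord0 ord0; rewrite A0 B0 tensmx11 mulmx1 hW.2 => -[].
have compressA i := halmos_dilation_compress (hA i).1.1.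
have compressB j := halmos_dilation_compress (hB j).1.1.
have compress1 : adjmx (inlmx d) *m 1%:M *m inlmx d = 1%:M.
  by rewrite mulmx1 inlmx_isometry.
exists (d + d), (fun i => halmos_dilation (A (lift ord0 i))),
  (fun j => halmos_dilation (B (lift ord0 j))),
  (tensmx (inlmx d) (inlmx d) *m W *m adjmx (tensmx (inlmx d) (inlmx d))).
split=> [i|]; first exact: halmos_dilation_projection (hA _).1 (hA _).2.
split=> [j|]; first exact: halmos_dilation_projection (hB _).1 (hB _).2.
split.
  by apply: density_conj hW; rewrite adjmx_tens tensmx_mul inlmx_isometry tensmx11.
split=> [i|]; first by rewrite mxtrace_conj_tens compressA compress1 hq B0.
split=> [j|]; first by rewrite mxtrace_conj_tens compressB compress1 hq A0.
by move=> i j; rewrite mxtrace_conj_tens compressA compressB hq.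
Qed.

End Bell.

Theorem theorem2 (R : realType) (n : nat) : (1 <= n)%N ->
  forall p : 'M[R]_(n.+1), bell p <-> bell_plus p.
Proof.
(* The equality also holds for n = 0. *)
move=> _ p; split; [exact: bell_plus_of_bell | exact: bell_of_bell_plus].
Qed.
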